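(* Let $\mu_0=\sum_{i=1}^{N_0}p_0^i\nu_0^i$ and $\mu_1=\sum_{j=1}^{N_1}p_1^j\nu_1^j$ be Gaussian mixture distributions on $\mathbb{R}^n$, let $\pi^*$ be a minimizer of $\sum_{i,j}W_2(\nu_0^i,\nu_1^j)^2\pi(i,j)$ over $\pi\in\Pi(p_0,p_1)$, and for $t\in[0,1]$ define $\mu_t=\sum_{i,j}\pi^*(i,j)\,\nu_t^{ij}$, where $\nu_t^{ij}$ is the displacement interpolation between $\nu_0^i$ and $\nu_1^j$ defined below. Then $d(\mu_s,\mu_t)=(t-s)\,d(\mu_0,\mu_1)$ for all $0\le s<t\le 1$.
   Context: A Gaussian distribution on $\mathbb{R}^n$ is the normal law $N(m,\Sigma)$ with mean $m\in\mathbb{R}^n$ and symmetric positive definite covariance $\Sigma$. For two Gaussians $\nu_0=N(m_0,\Sigma_0)$, $\nu_1=N(m_1,\Sigma_1)$, $W_2(\nu_0,\nu_1)$ denotes their 2-Wasserstein distance, which equals $W_2(\nu_0,\nu_1)^2=\|m_0-m_1\|^2+\operatorname{trace}\big(\Sigma_0+\Sigma_1-2(\Sigma_0^{1/2}\Sigma_1\Sigma_0^{1/2})^{1/2}\big)$; their displacement interpolation at time $t\in[0,1]$ is the Gaussian $\nu_t=N(m_t,\Sigma_t)$ with $m_t=(1-t)m_0+tm_1$ and $\Sigma_t=\Sigma_0^{-1/2}\big((1-t)\Sigma_0+t(\Sigma_0^{1/2}\Sigma_1\Sigma_0^{1/2})^{1/2}\big)^2\Sigma_0^{-1/2}$. A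 Gaussian mixture distribution is a probability distribution $\mu=\sum_{k=1}^N p^k\nu^k$ with $N$ finite, each $\nu^k$ Gaussian, and $p=(p^1,\dots,p^N)$ a probability vector. For mixtures $\mu_0=\sum_i p_0^i\nu_0^i$, $\mu_1=\sum_j p_1^j\nu_1^j$, $\Pi(p_0,p_1)$ is the set of nonnegative matrices $\pi$ with row sums $p_0^i$ and column sums $p_1^j$, and $d(\mu_0,\mu_1)=\sqrt{\min_{\pi\in\Pi(p_0,p_1)}\sum_{i,j}W_2(\nu_0^i,\nu_1^j)^2\pi(i,j)}$; $d(\mu_s,\mu_t)$ is defined in the same way using the mixture representations $\mu_s=\sum_{i,j}\pi^*(i,j)\nu_s^{ij}$ and $\mu_t=\sum_{i,j}\pi^*(i,j)\nu_t^{ij}$. *)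

From HB Require Import structures.
From mathcomp Require Import all_boot all_order all_algebra.
From mathcomp Require Import boolp classical_sets reals.
Set Implicit Arguments. Unset Strict Implicit. Unset Printing Implicit Defensive.
Import Order.TTheory GRing.Theory Num.Theory.
Local Open Scope ring_scope.
Local Open Scope classical_set_scope.

Section Defs.
Variable R : realType.

Definition psdmx n (A : 'M[R]_n) : Prop :=
  A^T = A /\ forall v : 'cV[R]_n, 0 <= (v^T *m A *m v) 0 0.
Definition spdmx n (A : 'M[R]_n) : Prop :=
  A^T = A /\ forall v : 'cV[R]_n, v != 0 -> 0 < (v^T *m A *m v) 0 0.

Definition sqrtm n (A : 'M[R]_n) : 'M[R]_n :=
  xget 0 [set S : 'M[R]_n | psdmx S /\ S *m S = A].

(* a Gaussian N(m, Sigma) on R^n, represented by its parameters (m, Sigma) *)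
Definition gauss n := ('cV[R]_n * 'M[R]_n)%type.

(* squared 2-Wasserstein distance between Gaussians (closed form) *)
Definition W2sq n (g0 g1 : gauss n) : R :=
  let: (m0, S0) := g0 in let: (m1, S1) := g1 in
  \sum_(i < n) ((m0 - m1) i 0) ^+ 2
  + \tr (S0 + S1 - 2%:R *: sqrtm (sqrtm S0 *m S1 *m sqrtm S0)).

Definition disp_interp n (g0 g1 : gauss n) (t : R) : gauss n :=
  let: (m0, S0) := g0 in let: (m1, S1) := g1 in
  let M := (1 - t) *: S0 + t *: sqrtm (sqrtm S0 *m S1 *m sqrtm S0) in
  ((1 - t) *: m0 + t *: m1,
   invmx (sqrtm S0) *m (M *m M) *m invmx (sqrtm S0)).

Definition probvec (I : finType) (p : I -> R) : Prop :=
  (forall i, 0 <= p i) /\ \sum_(i : I) p i = 1.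

Definition couplings (I J : finType) (p0 : I -> R) (p1 : J -> R)
  : set (I -> J -> R) :=
  [set pi | (forall i j, 0 <= pi i j)
         /\ (forall i, \sum_(j : J) pi i j = p0 i)
         /\ (forall j, \sum_(i : I) pi i j = p1 j)].

Definition coupling_cost (I J : finType) (c : I -> J -> R) (pi : I -> J -> R) : R :=
  \sum_(i : I) \sum_(j : J) c i j * pi i j.

(* d between two mixtures given by their representations (weights, components) *)
Definition mixd n (I J : finType) (p0 : I -> R) (g0 : I -> gauss n)
    (p1 : J -> R) (g1 : J -> gauss n) : R :=
  Num.sqrt (inf [set coupling_cost (fun i j => W2sq (g0 i) (g1 j)) pi
                 | pi in couplings p0 p1]).

End Defs.

From HB Require Import structures.
From mathcomp Require Import all_boot all_order all_algebra.
From mathcomp Require Import boolp classical_sets reals.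
From mathcomp.real_closed Require Import complex.
From mathcomp Require Import ring lra.
Import Order.TTheory GRing.Theory Num.Theory.
Local Open Scope ring_scope.
Set Implicit Arguments. Unset Strict Implicit. Unset Printing Implicit Defensive.

(* Let [T] be the optimal transport map from [N(0, Sigma0)] to
   [N(0, Sigma1)] and [L_s = (1 - s) I + s T]; then [nu_s = N(m_s, L_s Sigma0 L_s)],
   and as the [L_s] commute, [W2 (nu_s, nu_t) = (t - s) W2 (nu_0, nu_1)].  For an
   optimal [pi], the diagonal coupling of [(pi, pi)] therefore gives
   [d(mu_s, mu_t) <= (t - s) D] with [D = d(mu_0, mu_1)].  Conversely, any
   coupling [gm] of [(pi, pi)] glues into a coupling of [(p0, p1)], which costs at
   least [D^2]; bounding [W2 (nu_0^i, nu_1^l)] through [nu_s^ij] and [nu_t^kl] and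
   applying Minkowski's inequality in [L2(gm)] yields
   [D <= s D + sqrt (cost gm) + (1 - t) D].  The triangle inequality for [W2] on
   Gaussians comes from writing the Bures term as the minimum of
   [|Sigma^(1/2) - Sigma'^(1/2) U|_F^2] over orthogonal [U]. *)

Section PsdMatrices.
Variable R : realType.
Implicit Types n : nat.

Definition qform n (S : 'M[R]_n) (v : 'cV[R]_n) : R := (v^T *m S *m v) 0 0.

Definition frob2 n (M : 'M[R]_n) : R := \tr (M^T *m M).

Definition orthmx n (U : 'M[R]_n) : Prop := U^T *m U = 1%:M.

Lemma bilin_symC n (S : 'M[R]_n) (u v : 'cV[R]_n) : S^T = S ->
  u^T *m S *m v = v^T *m S *m u.
Proof.
move=> St; rewrite [LHS](_ : _ = (v^T *m S *m u)^T).
  by apply/matrixP => i j; rewrite (ord1 i) (ord1 j) mxE.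
by rewrite !trmx_mul trmxK St mulmxA.
Qed.

Lemma sqnorm_ge0 n (u : 'cV[R]_n) : 0 <= (u^T *m u) 0 0.
Proof. by rewrite mxE; apply: sumr_ge0 => i _; rewrite mxE -expr2 sqr_ge0. Qed.

Lemma sqnorm_eq0 n (u : 'cV[R]_n) : (u^T *m u) 0 0 = 0 -> u = 0.
Proof.
rewrite mxE => /eqP; rewrite psumr_eq0 => [/allP u0|i _]; last first.
  by rewrite mxE -expr2 sqr_ge0.
apply/matrixP => i j; rewrite !mxE (ord1 j).
by have := u0 i (mem_index_enum _); rewrite mxE -expr2 sqrf_eq0 => /eqP.
Qed.

Lemma qformDZ n (S : 'M[R]_n) (v w : 'cV[R]_n) (a : R) : S^T = S ->
  qform S (v + a *: w) = qform S v + 2 * a * (w^T *m S *m v) 0 0 + a ^+ 2 * qform S w.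
Proof.
move=> St; rewrite /qform (_ : (v + a *: w)^T = v^T + a *: w^T); last first.
  by rewrite linearD linearZ.
rewrite !mulmxDl !mulmxDr.
by rewrite -!scalemxAl -!scalemxAr (bilin_symC v w St) !mxE; ring.
Qed.

(* [qform S (v - a w) = a^2 qform S w - 2 a (w^T S v)] is nonnegative for every
   [a] only if [w^T S v = 0]; then take [w = S v]. *)
Lemma psdmx_qform_eq0 n (S : 'M[R]_n) (v : 'cV[R]_n) :
  psdmx S -> qform S v = 0 -> S *m v = 0.
Proof.
move=> [St S_ge0] Sv0.
have Sv_orth (w : 'cV[R]_n) : (w^T *m S *m v) 0 0 = 0.
  set b := (w^T *m S *m v) 0 0; set c := qform S w.
  have c_ge0 : 0 <= c by apply: S_ge0.
  set a := b / (c + 1).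
  have ba : b = a * (c + 1) by rewrite /a divfK // gt_eqF // ltr_wpDl.
  have := S_ge0 (v + (- a) *: w); rewrite -/(qform _ _) qformDZ // Sv0 -/b -/c ba.
  move=> qform_ge0; suff -> : a = 0 by rewrite mul0r.
  by apply/eqP; rewrite -sqrf_eq0 eq_le sqr_ge0 andbT; nra.
apply: sqnorm_eq0; have := Sv_orth (S *m v).
by rewrite trmx_mul St -!mulmxA.
Qed.

Lemma mxtrace_qform_col n (S M : 'M[R]_n) :
  \tr (M^T *m S *m M) = \sum_k qform S (col k M).
Proof.
apply: eq_bigr => k _; rewrite /qform tr_col -row_mul.
by rewrite !mxE; apply: eq_bigr => j _; rewrite !mxE.
Qed.

Lemma psdmx_tr_ge0 n (S M : 'M[R]_n) : psdmx S -> 0 <= \tr (M^T *m S *m M).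
Proof.
by move=> [_ S_ge0]; rewrite mxtrace_qform_col; apply: sumr_ge0 => k _; apply: S_ge0.
Qed.

Lemma psdmx_tr_eq0 n (S M : 'M[R]_n) : psdmx S -> \tr (M^T *m S *m M) = 0 ->
  S *m M = 0.
Proof.
move=> Spsd; rewrite mxtrace_qform_col => /eqP; rewrite psumr_eq0; last first.
  by move=> k _; apply: Spsd.2.
move=> /allP SM0; apply/matrixP => i k; rewrite mxE.
have /eqP/(psdmx_qform_eq0 Spsd) := SM0 k (mem_index_enum _).
by rewrite colE mulmxA -colE => /matrixP /(_ i 0); rewrite !mxE.
Qed.

Lemma psdmx1 n : psdmx (1%:M : 'M[R]_n).
Proof. by split=> [|v]; rewrite ?trmx1 // mulmx1 sqnorm_ge0. Qed.

Lemma frob2_ge0 n (M : 'M[R]_n) : 0 <= frob2 M.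
Proof. by have := psdmx_tr_ge0 M (@psdmx1 n); rewrite mulmx1. Qed.

Lemma frob2_eq0 n (M : 'M[R]_n) : frob2 M = 0 -> M = 0.
Proof. by have := @psdmx_tr_eq0 n 1%:M M (@psdmx1 n); rewrite mulmx1 mul1mx. Qed.

Lemma psdmx_tr_mul n (M : 'M[R]_n) : psdmx (M^T *m M).
Proof.
split=> [|v]; first by rewrite trmx_mul trmxK.
by rewrite mulmxA -trmx_mul -mulmxA sqnorm_ge0.
Qed.

Lemma psdmx_congr n (S M : 'M[R]_n) : psdmx S -> psdmx (M^T *m S *m M).
Proof.
move=> [St S_ge0]; split=> [|v]; first by rewrite !trmx_mul trmxK St mulmxA.
by have := S_ge0 (M *m v); rewrite trmx_mul !mulmxA.
Qed.

Lemma psdmxD n (S T : 'M[R]_n) : psdmx S -> psdmx T -> psdmx (S + T).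
Proof.
move=> [St S_ge0] [Tt T_ge0]; split=> [|v]; first by rewrite linearD /= St Tt.
by rewrite mulmxDr mulmxDl mxE addr_ge0.
Qed.

Lemma psdmxZ n (a : R) (S : 'M[R]_n) : 0 <= a -> psdmx S -> psdmx (a *: S).
Proof.
move=> a_ge0 [St S_ge0]; split=> [|v]; first by rewrite linearZ /= St.
by rewrite -scalemxAr -scalemxAl mxE mulr_ge0.
Qed.

Lemma spdmx_psd n (A : 'M[R]_n) : spdmx A -> psdmx A.
Proof.
move=> [At A_gt0]; split=> // v; have [->|/A_gt0/ltW //] := eqVneq v 0.
by rewrite mulmx0 mxE.
Qed.

Lemma spdmx_unit n (A : 'M[R]_n) : spdmx A -> A \in unitmx.
Proof.
move=> [At A_gt0]; rewrite unitmxE unitfE; apply/negP => /det0P [v v_neq0 vA].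
have : v^T != 0 by rewrite -trmx0 (inj_eq trmx_inj).
by move=> /A_gt0; rewrite trmxK vA mul0mx mxE ltxx.
Qed.

Lemma psdmx_unit_spd n (A : 'M[R]_n) : psdmx A -> A \in unitmx -> spdmx A.
Proof.
move=> Apsd Au; split=> [|v v_neq0]; first exact: Apsd.1.
rewrite lt_def Apsd.2 andbT; apply/eqP => /(psdmx_qform_eq0 Apsd) Av0.
by move: v_neq0; rewrite -(mulKmx Au v) Av0 mulmx0 eqxx.
Qed.

Lemma spdmx_congr n (S M : 'M[R]_n) : spdmx S -> M \in unitmx -> spdmx (M^T *m S *m M).
Proof.
move=> Sspd Mu; apply: psdmx_unit_spd; first exact/psdmx_congr/spdmx_psd.
by rewrite !unitmx_mul unitmx_tr Mu spdmx_unit.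
Qed.

Lemma spdmxD n (S T : 'M[R]_n) : spdmx S -> psdmx T -> spdmx (S + T).
Proof.
move=> [St S_gt0] [Tt T_ge0]; split=> [|v v_neq0]; first by rewrite linearD /= St Tt.
rewrite mulmxDr mulmxDl mxE; have := S_gt0 v v_neq0; have := T_ge0 v; lra.
Qed.

Lemma spdmxZ n (a : R) (S : 'M[R]_n) : 0 < a -> spdmx S -> spdmx (a *: S).
Proof.
move=> a_gt0 [St S_gt0]; split=> [|v v_neq0]; first by rewrite linearZ /= St.
by rewrite -scalemxAr -scalemxAl mxE mulr_gt0 ?S_gt0.
Qed.

Lemma spdmx1 n : spdmx (1%:M : 'M[R]_n).
Proof. by apply: psdmx_unit_spd; rewrite ?unitmx1 //; apply: psdmx1. Qed.

Lemma orthmx_mulC n (U : 'M[R]_n) : orthmx U -> U *m U^T = 1%:M.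
Proof. exact: mulmx1C. Qed.

Lemma orthmxM n (U V : 'M[R]_n) : orthmx U -> orthmx V -> orthmx (U *m V).
Proof.
rewrite /orthmx => Uo Vo.
by rewrite trmx_mul -mulmxA (mulmxA U^T) Uo mul1mx.
Qed.

Lemma frob2_mulmx_orth n (M U : 'M[R]_n) : orthmx U -> frob2 (M *m U) = frob2 M.
Proof.
move=> /orthmx_mulC UUt.
by rewrite /frob2 trmx_mul mxtrace_mulC -!mulmxA (mulmxA U) UUt mul1mx mxtrace_mulC.
Qed.

Lemma frob2E n (M : 'M[R]_n) : frob2 M = \sum_(p : 'I_n * 'I_n) M p.1 p.2 ^+ 2.
Proof.
rewrite /frob2 /mxtrace -(pair_big predT predT (fun i j => M i j ^+ 2)) /=.
rewrite exchange_big /=; apply: eq_bigr => k _; rewrite mxE.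
by apply: eq_bigr => i _; rewrite !mxE expr2.
Qed.

End PsdMatrices.

Section MatrixSqrt.
Variable R : realType.
Implicit Types n : nat.
Local Notation toC := (real_complex R).

(* With [D = S - T]: [S D + D T = 0], so [tr (D S D) = - tr (D T D)] with both
   traces nonnegative; hence [S D = T D = 0] and [D^T D = 0]. *)
Lemma psdmx_sqrt_unique n (S T : 'M[R]_n) : psdmx S -> psdmx T ->
  S *m S = T *m T -> S = T.
Proof.
move=> Spsd Tpsd SS_TT; have [St _] := Spsd; have [Tt _] := Tpsd.
set D := S - T; have Dt : D^T = D by rewrite /D linearB /= St Tt.
have SD_DT : S *m D + D *m T = 0.
  by rewrite /D mulmxBr mulmxBl SS_TT addrC addrA subrK subrr.
have DSD : D *m S *m D = - (D *m D *m T).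
  by apply/eqP; rewrite -subr_eq0 opprK -!mulmxA -mulmxDr SD_DT mulmx0.
have trS_ge0 : 0 <= \tr (D^T *m S *m D) := psdmx_tr_ge0 _ Spsd.
have trT_ge0 : 0 <= \tr (D^T *m T *m D) := psdmx_tr_ge0 _ Tpsd.
have trST : \tr (D^T *m S *m D) = - \tr (D^T *m T *m D).
  by rewrite Dt DSD linearN /= -mulmxA mxtrace_mulC.
have /(psdmx_tr_eq0 Spsd) SD0 : \tr (D^T *m S *m D) = 0 by lra.
have /(psdmx_tr_eq0 Tpsd) TD0 : \tr (D^T *m T *m D) = 0 by lra.
apply/eqP; rewrite -subr_eq0 -/D; apply/eqP/frob2_eq0.
by rewrite /frob2 Dt {1}/D mulmxBl SD0 TD0 subrr linear0.
Qed.

Lemma comm_diag_map n (M : 'M[R]_n) (d : 'rV[R]_n) (f : R -> R) :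
  M *m diag_mx d = diag_mx d *m M ->
  M *m diag_mx (map_mx f d) = diag_mx (map_mx f d) *m M.
Proof.
move=> Md; apply/matrixP => i j; have := congr1 (fun X : 'M[R]_n => X i j) Md.
rewrite !mul_mx_diag !mul_diag_mx !mxE => Mdij.
have [->|dij] := eqVneq (d 0 i) (d 0 j); first by rewrite mulrC.
suff -> : M i j = 0 by rewrite mulr0 mul0r.
have /eqP : M i j * (d 0 j - d 0 i) = 0 by rewrite mulrBr Mdij mulrC subrr.
by rewrite mulf_eq0 subr_eq0 [d 0 j == _]eq_sym (negPf dij) orbF => /eqP.
Qed.

(* Spectral theorem over [R], obtained from the complex one by [real_similar];
   the resulting [Q] need not be orthogonal. *)
Lemma symmx_diagonalizable n (A : 'M[R]_n) : A^T = A ->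
  exists Q (d : 'rV[R]_n), Q \in unitmx /\ Q *m A = diag_mx d *m Q.
Proof.
move=> At; set AC := map_mx toC A.
have realC (x : R) : toC x \is Num.real by rewrite complex_real.
have AC_herm : AC \is hermsymmx.
  apply/is_hermitianmxP; rewrite expr0 scale1r; apply/matrixP => i j.
  by rewrite !mxE conj_Creal ?realC // -[in LHS]At mxE.
have /orthomx_spectralP ACE := hermitian_normalmx AC_herm.
set P := spectralmx AC in ACE; set sp := spectral_diag AC in ACE.
have Pu : P \in unitmx by apply: spectral_unit.
have sim : similar_in unitmx AC (diag_mx sp).
  exists P => //; apply/similarP => //.
  by rewrite {1}ACE !mulmxA mulmxV // mul1mx.
have AC_real : AC \is a realmx by apply/mxOverP => i j; rewrite mxE realC.
have sp_real : sp \is a realmx by apply: hermitian_spectral_diag_real.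
have D_real : diag_mx sp \is a realmx.
  by apply/mxOverP => i j; rewrite mxE rpredMn // (mxOverP sp_real).
have [Q /andP [Q_real Qu] /(similarP Qu) QE] := real_similar sim AC_real D_real.
have toC_Re m (M : 'M[R[i]]_(m, n)) : M \is a realmx ->
    map_mx toC (map_mx (@complex.Re R) M) = M.
  by move=> Mr; apply/matrixP => i j; rewrite !mxE RRe_real // (mxOverP Mr).
exists (map_mx (@complex.Re R) Q), (map_mx (@complex.Re R) sp); split.
  by rewrite -(map_unitmx toC) toC_Re.
apply: (@map_mx_inj _ _ toC).
by rewrite !map_mxM map_diag_mx !toC_Re.
Qed.

Section SymmetricCalculus.
Variables (n : nat) (A Q : 'M[R]_n) (d : 'rV[R]_n).
Hypotheses (At : A^T = A) (Qu : Q \in unitmx) (QA : Q *m A = diag_mx d *m Q).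

Definition mxfun (f : R -> R) : 'M[R]_n := invmx Q *m diag_mx (map_mx f d) *m Q.

Lemma mxfun_id : mxfun id = A.
Proof. by rewrite /mxfun map_mx_id // -mulmxA -QA mulKmx. Qed.

Lemma mxfun_eq f g : (forall k, f (d 0 k) = g (d 0 k)) -> mxfun f = mxfun g.
Proof. by move=> fg; congr (_ *m diag_mx _ *m _); apply/rowP => k; rewrite !mxE. Qed.

Lemma mxfunM f g : mxfun f *m mxfun g = mxfun (fun x => f x * g x).
Proof.
rewrite /mxfun !mulmxA mulmxK // -(mulmxA (invmx Q) (diag_mx _) (diag_mx _)).
by rewrite mulmx_diag; congr (_ *m diag_mx _ *m _); apply/rowP => k; rewrite !mxE.
Qed.

(* [A = Q^-1 D Q = Q^T D Q^-T] shows that [Q Q^T] commutes with [D], hence with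
   every [diag_mx (map_mx f d)]. *)
Lemma mxfun_sym f : (mxfun f)^T = mxfun f.
Proof.
set G := Q *m Q^T; have QTu : Q^T \in unitmx by rewrite unitmx_tr.
have AE : A = invmx Q *m diag_mx d *m Q by rewrite -mulmxA -QA mulKmx.
have GD : G *m diag_mx d = diag_mx d *m G.
  have : Q *m (Q^T *m (diag_mx d *m invmx Q^T)) *m Q^T = Q *m A *m Q^T.
    by rewrite -At AE !trmx_mul trmx_inv tr_diag_mx mulmxA.
  by rewrite AE !mulmxA mulmxV // mul1mx mulmxKV // /G mulmxA.
have GF := comm_diag_map f GD.
rewrite /mxfun !trmx_mul trmx_inv tr_diag_mx.
have -> : Q^T *m (diag_mx (map_mx f d) *m invmx Q^T) =
          invmx Q *m (G *m diag_mx (map_mx f d)) *m invmx Q^T.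
  by rewrite /G !mulmxA mulVmx // mul1mx.
by rewrite GF /G !mulmxA mulmxK.
Qed.

Lemma psdmx_eigen_ge0 k : psdmx A -> 0 <= d 0 k.
Proof.
move=> [_ A_ge0]; set q := row k Q.
have qA : q *m A = d 0 k *: q.
  by rewrite /q -row_mul QA row_mul row_diag_mx -scalemxAl -rowE.
have q_neq0 : q != 0.
  apply/eqP => q0; have := congr1 (row k) (mulmxV Qu).
  rewrite row_mul -/q q0 mul0mx row1 => /rowP /(_ k).
  by rewrite !mxE !eqxx => /eqP; rewrite eq_sym oner_eq0.
have qq_gt0 : 0 < ((q^T)^T *m q^T) 0 0.
  rewrite lt_def sqnorm_ge0 andbT; apply: contra q_neq0 => /eqP/sqnorm_eq0 q0.
  by rewrite -[q]trmxK q0 trmx0.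
rewrite trmxK in qq_gt0.
by have := A_ge0 q^T; rewrite trmxK qA -scalemxAl mxE pmulr_lge0.
Qed.

End SymmetricCalculus.

(* The square root is [r *m r] for the symmetric fourth root [r], which makes it
   visibly positive semidefinite. *)
Lemma psdmx_sqrt_exists n (A : 'M[R]_n) : psdmx A -> exists S, psdmx S /\ S *m S = A.
Proof.
move=> Apsd; have [At _] := Apsd; have [Q [d [Qu QA]]] := symmx_diagonalizable At.
set r := mxfun Q d (fun x => Num.sqrt (Num.sqrt x)).
exists (r *m r); split.
  by have := psdmx_tr_mul r; rewrite (mxfun_sym At Qu QA).
rewrite mulmxA !(mxfunM d Qu) -(mxfun_id Qu QA); apply: mxfun_eq => k.
have d_ge0 := psdmx_eigen_ge0 Qu QA k Apsd.
rewrite /= (_ : forall y : R, y * y * y * y = (y ^+ 2) ^+ 2); last by move=> y; ring.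
by rewrite sqr_sqrtr ?sqrtr_ge0 // sqr_sqrtr.
Qed.

Lemma sqrtmP n (A : 'M[R]_n) : psdmx A -> psdmx (sqrtm A) /\ sqrtm A *m sqrtm A = A.
Proof.
move=> /psdmx_sqrt_exists [S SA].
exact: (xgetPex 0 (P := [set S : 'M[R]_n | psdmx S /\ S *m S = A]) (ex_intro _ S SA)).
Qed.

Lemma sqrtm_unique n (A S : 'M[R]_n) : psdmx S -> S *m S = A -> sqrtm A = S.
Proof.
move=> Spsd SS_A; have Apsd : psdmx A by rewrite -SS_A -{1}Spsd.1; apply: psdmx_tr_mul.
have [sqrtA_psd sqrtA_sq] := sqrtmP Apsd.
by apply: psdmx_sqrt_unique => //; rewrite sqrtA_sq.
Qed.

Lemma sqrtm_spd n (A : 'M[R]_n) : spdmx A ->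
  [/\ spdmx (sqrtm A), sqrtm A \in unitmx, (sqrtm A)^T = sqrtm A &
      sqrtm A *m sqrtm A = A].
Proof.
move=> Aspd; have [sqrtA_psd sqrtA_sq] := sqrtmP (spdmx_psd Aspd).
have sqrtAu : sqrtm A \in unitmx.
  by have := spdmx_unit Aspd; rewrite -{1}sqrtA_sq unitmx_mul => /andP [].
by split=> //; [apply: psdmx_unit_spd | case: sqrtA_psd].
Qed.

End MatrixSqrt.

Section BuresWasserstein.
Variable R : realType.
Implicit Types n : nat.

Definition sqdist n (m m' : 'cV[R]_n) : R := \sum_i ((m - m') i 0) ^+ 2.

Definition otmap n (A B : 'M[R]_n) : 'M[R]_n :=
  invmx (sqrtm A) *m sqrtm (sqrtm A *m B *m sqrtm A) *m invmx (sqrtm A).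

Definition interp_map n (A B : 'M[R]_n) (s : R) : 'M[R]_n :=
  (1 - s) *: 1%:M + s *: otmap A B.

Lemma sqdist_ge0 n (m m' : 'cV[R]_n) : 0 <= sqdist m m'.
Proof. by apply: sumr_ge0 => i _; apply: sqr_ge0. Qed.

Lemma W2sq_congr n (m m' : 'cV[R]_n) (X L : 'M[R]_n) : spdmx X -> psdmx L ->
  W2sq (m, X) (m', L *m X *m L) = sqdist m m' + \tr ((1%:M - L) *m X *m (1%:M - L)).
Proof.
move=> Xspd Lpsd; rewrite /W2sq.
have [_ xu xt xx] := sqrtm_spd Xspd; set x := sqrtm X in xu xt xx *.
have -> : sqrtm (x *m (L *m X *m L) *m x) = x *m L *m x.
  apply: sqrtm_unique; first by have := psdmx_congr x Lpsd; rewrite xt.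
  by rewrite -xx !mulmxA.
congr (_ + _); have [Lt _] := Lpsd.
rewrite !mulmxBl !mulmxBr !mul1mx !mulmx1 !raddfD /= !raddfN /= opprK mxtraceZ.
have -> : \tr (x *m L *m x) = \tr (X *m L) by rewrite mxtrace_mulC mulmxA xx.
rewrite [\tr (L *m X)]mxtrace_mulC; lra.
Qed.

Section Geodesic.
Variables (n : nat) (A B : 'M[R]_n).
Hypotheses (Aspd : spdmx A) (Bspd : spdmx B).

Local Notation T := (otmap A B).
Local Notation L := (interp_map A B).

Let aBa_spd : spdmx (sqrtm A *m B *m sqrtm A).
Proof.
have [_ au aT _] := sqrtm_spd Aspd.
by have := spdmx_congr Bspd au; rewrite aT.
Qed.

Lemma otmap_spd : spdmx T.
Proof.
have [_ au aT _] := sqrtm_spd Aspd; have [Cspd _ _ _] := sqrtm_spd aBa_spd.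
have iau : invmx (sqrtm A) \in unitmx by rewrite unitmx_inv.
by have := spdmx_congr Cspd iau; rewrite trmx_inv aT.
Qed.

Lemma otmap_push : T *m A *m T = B.
Proof.
have [_ au aT aa] := sqrtm_spd Aspd; have [_ _ _ CC] := sqrtm_spd aBa_spd.
rewrite /otmap; set a := sqrtm A in au aT aa CC *; set C := sqrtm _ in CC *.
rewrite -aa !mulmxA mulmxKV // -(mulmxA _ a) mulmxV // mulmx1.
by rewrite -(mulmxA _ C C) CC !mulmxA mulVmx // mul1mx mulmxK.
Qed.

Lemma interp_map_sym s : (L s)^T = L s.
Proof. by have [Tt _] := otmap_spd; rewrite /interp_map linearD !linearZ /= trmx1 Tt. Qed.

Lemma interp_map_spd s : 0 <= s <= 1 -> spdmx (L s).
Proof.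
case/andP => s_ge0 s_le1; rewrite /interp_map.
have [->|s_neq0] := eqVneq s 0.
  by rewrite subr0 scale1r scale0r addr0; apply: spdmx1.
rewrite addrC; apply: spdmxD.
  by apply: spdmxZ; [rewrite lt_def s_neq0 | exact: otmap_spd].
by apply: psdmxZ; [rewrite subr_ge0 | exact: psdmx1].
Qed.

Lemma interp_mapM s t : L s *m L t = ((1 - s) * (1 - t)) *: 1%:M +
  ((1 - s) * t + s * (1 - t)) *: T + (s * t) *: (T *m T).
Proof.
rewrite /interp_map !mulmxDl !mulmxDr -!scalemxAl -!scalemxAr !mul1mx !mulmx1.
by apply/matrixP => i j; rewrite !mxE; ring.
Qed.

Lemma interp_mapC s t : L s *m L t = L t *m L s.
Proof. by rewrite !interp_mapM; congr (_ *: _ + _ *: _ + _ *: _); ring. Qed.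

Lemma interp_mapM_psd s t : 0 <= s <= 1 -> 0 <= t <= 1 -> psdmx (L s *m L t).
Proof.
move=> /andP [s_ge0 s_le1] /andP [t_ge0 t_le1].
have Tpsd := spdmx_psd otmap_spd.
have TTpsd : psdmx (T *m T) by have := psdmx_tr_mul T; rewrite Tpsd.1.
rewrite interp_mapM; apply: psdmxD; first apply: psdmxD.
- by apply: psdmxZ; [nra | exact: psdmx1].
- by apply: psdmxZ => //; nra.
- by apply: psdmxZ => //; nra.
Qed.

Lemma interp_mapB s t : L s - L t = (t - s) *: (1%:M - T).
Proof. by apply/matrixP => i j; rewrite !mxE; ring. Qed.

Lemma disp_interpE (m0 m1 : 'cV[R]_n) s :
  disp_interp (m0, A) (m1, B) s = ((1 - s) *: m0 + s *: m1, L s *m A *m L s).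
Proof.
have [_ au _ aa] := sqrtm_spd Aspd; rewrite /= /interp_map /otmap; congr (_, _).
set a := sqrtm A in au aa *; set C := sqrtm _.
set M := (1 - s) *: A + s *: C; set Ls := _ + _ *: _.
have La : Ls *m a = invmx a *m M.
  rewrite /Ls /M mulmxDl mulmxDr -!scalemxAl -!scalemxAr mul1mx.
  by rewrite mulmxKV // -aa mulmxA mulVmx // mul1mx.
have aL : a *m Ls = M *m invmx a.
  rewrite /Ls /M mulmxDl mulmxDr -!scalemxAl -!scalemxAr mulmx1.
  by rewrite !mulmxA mulmxV // mul1mx -aa mulmxK.
by rewrite -aa mulmxA -(mulmxA (Ls *m a)) La aL !mulmxA.
Qed.

Lemma W2sq_otmap (m0 m1 : 'cV[R]_n) :
  W2sq (m0, A) (m1, B) = sqdist m0 m1 + \tr ((1%:M - T) *m A *m (1%:M - T)).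
Proof. by rewrite -{1}otmap_push W2sq_congr //; apply/spdmx_psd/otmap_spd. Qed.

End Geodesic.

Definition W2 n (g h : gauss R n) : R := Num.sqrt (W2sq g h).

Section GaussianGeodesic.
Variables (n : nat) (g0 g1 : gauss R n).
Hypotheses (g0_spd : spdmx g0.2) (g1_spd : spdmx g1.2).

(* With [K = L_t L_s^-1], the covariance of [nu_t] is [K (cov nu_s) K], and [K] is
   positive semidefinite since all the [L_u] are polynomials in [T]. *)
Lemma W2sq_disp_interp s t : 0 <= s <= 1 -> 0 <= t <= 1 ->
  W2sq (disp_interp g0 g1 s) (disp_interp g0 g1 t) = (t - s) ^+ 2 * W2sq g0 g1.
Proof.
move: g0_spd g1_spd; case: g0 g1 => [m0 A] [m1 B] Aspd Bspd s01 t01.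
rewrite !disp_interpE // W2sq_otmap //.
set Ls := interp_map A B s; set Lt := interp_map A B t.
have Lsu := spdmx_unit (interp_map_spd Aspd Bspd s01).
set K := Lt *m invmx Ls.
have LtALt : Lt *m A *m Lt = K *m (Ls *m A *m Ls) *m K.
  rewrite /K !mulmxA mulmxKV // -(mulmxA (Lt *m A) Ls Lt).
  by rewrite interp_mapC mulmxA mulmxK.
have Kpsd : psdmx K.
  have -> : K = (invmx Ls)^T *m (Ls *m Lt) *m invmx Ls.
    by rewrite trmx_inv (interp_map_sym Aspd Bspd) !mulmxA mulVmx // mul1mx.
  exact/psdmx_congr/interp_mapM_psd.
have LsALs_spd : spdmx (Ls *m A *m Ls).
  by have := spdmx_congr Aspd Lsu; rewrite (interp_map_sym Aspd Bspd).
have KLs : (1%:M - K) *m Ls = Ls - Lt by rewrite mulmxBl mul1mx /K mulmxKV.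
have LsK : Ls *m (1%:M - K) = Ls - Lt.
  by rewrite mulmxBr mulmx1 /K mulmxA interp_mapC mulmxK.
rewrite LtALt W2sq_congr // !mulmxA KLs -mulmxA LsK interp_mapB.
rewrite -scalemxAl -scalemxAr -scalemxAl scalerA -expr2 mxtraceZ mulrDr.
congr (_ + _); rewrite /sqdist mulr_sumr; apply: eq_bigr => i _; rewrite !mxE; ring.
Qed.

Lemma disp_interp0 : disp_interp g0 g1 0 = g0.
Proof.
move: g0_spd; case: g0 g1 => [m0 A] [m1 B] Aspd.
by rewrite disp_interpE // /interp_map subr0 !scale1r !scale0r !addr0 mulmx1 mul1mx.
Qed.

Lemma disp_interp1 : disp_interp g0 g1 1 = g1.
Proof.
move: g0_spd g1_spd; case: g0 g1 => [m0 A] [m1 B] Aspd Bspd.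
by rewrite disp_interpE // /interp_map subrr !scale0r !scale1r !add0r otmap_push.
Qed.

Lemma disp_interp_spd s : 0 <= s <= 1 -> spdmx (disp_interp g0 g1 s).2.
Proof.
move: g0_spd g1_spd; case: g0 g1 => [m0 A] [m1 B] Aspd Bspd s01.
have Lsu := spdmx_unit (interp_map_spd Aspd Bspd s01).
rewrite disp_interpE //=; have := spdmx_congr Aspd Lsu.
by rewrite (interp_map_sym Aspd Bspd).
Qed.

Lemma W2_disp_interp s t : 0 <= s -> s <= t -> t <= 1 ->
  W2 (disp_interp g0 g1 s) (disp_interp g0 g1 t) = (t - s) * W2 g0 g1.
Proof.
move=> s_ge0 st t_le1; rewrite /W2 W2sq_disp_interp; last 2 first.
- by rewrite s_ge0 (le_trans st).
- by rewrite t_le1 (le_trans s_ge0).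
by rewrite sqrtrM ?sqr_ge0 // sqrtr_sqr ger0_norm // subr_ge0.
Qed.

End GaussianGeodesic.
End BuresWasserstein.

Section L2Norm.
Variables (R : realType) (I : finType) (w : I -> R).
Hypothesis w_ge0 : forall i, 0 <= w i.

Definition l2norm (f : I -> R) : R := Num.sqrt (\sum_i w i * f i ^+ 2).

Lemma l2norm_ge0 f : 0 <= l2norm f.
Proof. exact: sqrtr_ge0. Qed.

Lemma l2norm_sqr f : l2norm f ^+ 2 = \sum_i w i * f i ^+ 2.
Proof. by rewrite sqr_sqrtr // sumr_ge0 // => i _; rewrite mulr_ge0 ?sqr_ge0 ?w_ge0. Qed.

(* Lagrange's identity: the defect is [1/2 sum_ij w_i w_j (f_i g_j - f_j g_i)^2]. *)
Lemma cauchy_schwarz (f g : I -> R) :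
  (\sum_i w i * f i * g i) ^+ 2 <= (\sum_i w i * f i ^+ 2) * (\sum_i w i * g i ^+ 2).
Proof.
set A := \sum_i w i * f i ^+ 2; set B := \sum_i w i * g i ^+ 2.
set C := \sum_i w i * f i * g i.
have lagrange : \sum_i \sum_j w i * w j * (f i * g j - f j * g i) ^+ 2 =
    2 * (A * B - C ^+ 2).
  have AB : \sum_i \sum_j (w i * f i ^+ 2) * (w j * g j ^+ 2) = A * B.
    by rewrite big_distrlr.
  have BA : \sum_i \sum_j (w j * f j ^+ 2) * (w i * g i ^+ 2) = A * B.
    by rewrite exchange_big /= big_distrlr.
  have CC : \sum_i \sum_j (w i * f i * g i) * (w j * f j * g j) = C ^+ 2.
    by rewrite expr2 big_distrlr.
  rewrite (_ : \sum_i \sum_j w i * w j * (f i * g j - f j * g i) ^+ 2 =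
    \sum_i \sum_j (w i * f i ^+ 2) * (w j * g j ^+ 2) +
    \sum_i \sum_j (w j * f j ^+ 2) * (w i * g i ^+ 2) -
    2 * \sum_i \sum_j (w i * f i * g i) * (w j * f j * g j)).
    by rewrite AB BA CC; ring.
  rewrite mulr_sumr -big_split -sumrB /=; apply: eq_bigr => i _.
  by rewrite mulr_sumr -big_split -sumrB /=; apply: eq_bigr => j _; ring.
rewrite -subr_ge0 -(@pmulr_rge0 _ 2) // -lagrange.
apply: sumr_ge0 => i _; apply: sumr_ge0 => j _.
by rewrite mulr_ge0 ?sqr_ge0 // mulr_ge0.
Qed.

Lemma l2norm_triangle f g : l2norm (f \+ g) <= l2norm f + l2norm g.
Proof.
have fg_le : \sum_i w i * f i * g i <= l2norm f * l2norm g.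
  apply: le_trans (ler_norm _) _; rewrite -sqrtr_sqr.
  rewrite -[l2norm f * _]ger0_norm ?mulr_ge0 ?l2norm_ge0 // -sqrtr_sqr.
  by rewrite ler_sqrt ?sqr_ge0 // exprMn !l2norm_sqr cauchy_schwarz.
rewrite -[X in _ <= X]ger0_norm ?addr_ge0 ?l2norm_ge0 // -sqrtr_sqr ler_sqrt ?sqr_ge0 //.
rewrite sqrrD !l2norm_sqr -mulr_natr.
have -> : \sum_i w i * (f \+ g) i ^+ 2 =
    \sum_i w i * f i ^+ 2 + \sum_i w i * g i ^+ 2 + 2 * \sum_i w i * f i * g i.
  by rewrite mulr_sumr -!big_split /=; apply: eq_bigr => i _; ring.
lra.
Qed.

Lemma l2norm_le f g : (forall i, 0 <= f i <= g i) -> l2norm f <= l2norm g.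
Proof.
move=> fg; rewrite ler_sqrt ?sumr_ge0 // => [|i _]; last by rewrite mulr_ge0 ?sqr_ge0.
apply: ler_sum => i _; apply: ler_wpM2l => //.
by have /andP [f_ge0 fg_i] := fg i; nra.
Qed.

End L2Norm.

Section W2Triangle.
Variable R : realType.
Implicit Types n : nat.

(* [0 <= frob2 (q - W q) = 2 tr P - 2 tr (P W)] for the square root [q] of [P]. *)
Lemma mxtrace_psd_orth_le n (P W : 'M[R]_n) : psdmx P -> orthmx W ->
  \tr (P *m W) <= \tr P.
Proof.
move=> Ppsd Wo; have [[qt _] qq] := sqrtmP Ppsd; set q := sqrtm P in qt qq *.
have := frob2_ge0 (q - W *m q); rewrite /frob2.
have -> : (q - W *m q)^T = q^T - (W *m q)^T by rewrite linearB.
rewrite trmx_mul qt mulmxBl !mulmxBr !raddfB /=.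
have e1 : \tr (q *m (W *m q)) = \tr (P *m W).
  by rewrite mxtrace_mulC -mulmxA qq mxtrace_mulC.
have e2 : \tr (q *m W^T *m q) = \tr (P *m W).
  by rewrite -mxtrace_tr !trmx_mul trmxK qt mulmxA -e1 mulmxA.
have e3 : \tr (q *m W^T *m (W *m q)) = \tr P.
  by rewrite -mulmxA (mulmxA W^T) Wo mul1mx qq.
rewrite e1 e2 e3 -qq; lra.
Qed.

Lemma polar_decomposition n (Z : 'M[R]_n) : Z \in unitmx ->
  exists2 U, orthmx U & Z = U *m sqrtm (Z^T *m Z).
Proof.
move=> Zu; have ZZ_spd : spdmx (Z^T *m Z).
  by have := spdmx_congr (@spdmx1 R n) Zu; rewrite mulmx1.
have [_ Pu Pt PP] := sqrtm_spd ZZ_spd; set P := sqrtm _ in Pu Pt PP *.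
exists (Z *m invmx P); last by rewrite mulmxKV.
rewrite /orthmx trmx_mul trmx_inv Pt !mulmxA -(mulmxA (invmx P) Z^T Z) -PP.
by rewrite mulmxA mulVmx // mul1mx mulmxV.
Qed.

Lemma frob2_subr_orth n (x y U : 'M[R]_n) : x^T = x -> y^T = y -> orthmx U ->
  frob2 (x - y *m U) = \tr (x *m x) + \tr (y *m y) - 2 * \tr (x *m y *m U).
Proof.
move=> xt yt Uo; have UUt := orthmx_mulC Uo.
rewrite /frob2; have -> : (x - y *m U)^T = x^T - (y *m U)^T by rewrite linearB.
rewrite trmx_mul xt yt mulmxBl !mulmxBr !raddfB /=.
have -> : \tr (U^T *m y *m x) = \tr (x *m y *m U).
  by rewrite -mxtrace_tr !trmx_mul trmxK xt yt mulmxA.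
have -> : \tr (U^T *m y *m (y *m U)) = \tr (y *m y).
  by rewrite mxtrace_mulC -!mulmxA (mulmxA U) UUt mul1mx.
rewrite mulmxA; lra.
Qed.

(* The Bures term [tr X + tr Y - 2 tr (x Y x)^(1/2)] is the minimum over orthogonal
   [U] of [frob2 (x - y U)], attained at the polar factor of [y x]. *)
Lemma W2sq_orth_min n (m m' : 'cV[R]_n) (X Y : 'M[R]_n) : spdmx X -> spdmx Y ->
  (forall U, orthmx U ->
     W2sq (m, X) (m', Y) <= sqdist m m' + frob2 (sqrtm X - sqrtm Y *m U)) /\
  exists2 U, orthmx U &
     W2sq (m, X) (m', Y) = sqdist m m' + frob2 (sqrtm X - sqrtm Y *m U).
Proof.
move=> Xspd Yspd.
have [_ xu xt xx] := sqrtm_spd Xspd; have [_ yu yt yy] := sqrtm_spd Yspd.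
set x := sqrtm X in xu xt xx *; set y := sqrtm Y in yu yt yy *.
have yxu : y *m x \in unitmx by rewrite unitmx_mul yu xu.
have yxT : (y *m x)^T = x *m y by rewrite trmx_mul xt yt.
have yxTyx : (y *m x)^T *m (y *m x) = x *m Y *m x.
  by rewrite yxT !mulmxA -(mulmxA x y y) yy.
have W2sqE : W2sq (m, X) (m', Y) =
    sqdist m m' + (\tr X + \tr Y - 2 * \tr (sqrtm (x *m Y *m x))).
  by rewrite /W2sq -/x !raddfD /= raddfN /= mxtraceZ.
have frobE U : orthmx U -> frob2 (x - y *m U) = \tr X + \tr Y - 2 * \tr (x *m y *m U).
  by move=> Uo; rewrite frob2_subr_orth // xx yy.
have [U0 U0o yxE] := polar_decomposition yxu.
have [Ppsd _] := sqrtmP (psdmx_tr_mul (y *m x)).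
split=> [U Uo|].
  rewrite W2sqE frobE // lerD2l lerD2l lerN2 ler_pM2l // -yxT -yxTyx.
  rewrite {1}yxE (trmx_mul U0) Ppsd.1 -mulmxA; apply: mxtrace_psd_orth_le Ppsd _.
  by apply: orthmxM Uo; rewrite /orthmx trmxK; apply: orthmx_mulC.
exists U0 => //; rewrite W2sqE frobE // -yxT -yxTyx.
by rewrite {3}yxE (trmx_mul U0) Ppsd.1 -mulmxA U0o mulmx1.
Qed.

Lemma W2sq_ge0 n (g h : gauss R n) : spdmx g.2 -> spdmx h.2 -> 0 <= W2sq g h.
Proof.
case: g h => [m X] [m' Y] Xspd Yspd; have [_ [U _ ->]] := W2sq_orth_min m m' Xspd Yspd.
by rewrite addr_ge0 ?sqdist_ge0 ?frob2_ge0.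
Qed.

Definition mean_mx_coords n (v : 'cV[R]_n) (M : 'M[R]_n)
    (k : 'I_n + 'I_n * 'I_n) : R :=
  match k with inl i => v i 0 | inr p => M p.1 p.2 end.

Lemma sqrt_sqdist_frob2 n (m m' : 'cV[R]_n) (M : 'M[R]_n) :
  Num.sqrt (sqdist m m' + frob2 M) = l2norm (fun=> 1) (mean_mx_coords (m - m') M).
Proof.
rewrite /l2norm big_sumType frob2E /sqdist.
by congr (Num.sqrt (_ + _)); apply: eq_bigr => k _; rewrite mul1r.
Qed.

(* Realise [W2 a b] and [W2 b c] with orthogonal [U1], [U2]; then [U2 U1] is a
   competitor for [W2 a c], and [frob2] is invariant under [_ *m U1]. *)
Lemma W2_triangle n (a b c : gauss R n) : spdmx a.2 -> spdmx b.2 -> spdmx c.2 ->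
  W2 a c <= W2 a b + W2 b c.
Proof.
case: a b c => [ma X] [mb Y] [mc Z] Xspd Yspd Zspd.
have [_ [U1 U1o E1]] := W2sq_orth_min ma mb Xspd Yspd.
have [_ [U2 U2o E2]] := W2sq_orth_min mb mc Yspd Zspd.
have [W2sq_le _] := W2sq_orth_min ma mc Xspd Zspd.
apply: le_trans
  (_ : Num.sqrt (sqdist ma mc + frob2 (sqrtm X - sqrtm Z *m (U2 *m U1))) <= _).
  rewrite ler_sqrt; first exact/W2sq_le/orthmxM.
  by rewrite addr_ge0 ?sqdist_ge0 ?frob2_ge0.
rewrite /W2 E1 E2 -(frob2_mulmx_orth (sqrtm Y - sqrtm Z *m U2) U1o).
rewrite !sqrt_sqdist_frob2.
rewrite (_ : sqrtm X - sqrtm Z *m (U2 *m U1) =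
    (sqrtm X - sqrtm Y *m U1) + (sqrtm Y - sqrtm Z *m U2) *m U1); last first.
  by rewrite mulmxBl addrA subrK mulmxA.
rewrite (_ : mean_mx_coords _ _ = mean_mx_coords (ma - mb) (sqrtm X - sqrtm Y *m U1)
    \+ mean_mx_coords (mb - mc) ((sqrtm Y - sqrtm Z *m U2) *m U1)).
  by apply: l2norm_triangle => _; apply: ler01.
by apply/funext => -[i|p] /=; rewrite !mxE //; ring.
Qed.

End W2Triangle.

Section Couplings.
Variable R : realType.

Lemma big_pair_uncurry (I J : finType) (F : I * J -> R) :
  \sum_i \sum_j F (i, j) = \sum_p F p.
Proof. by rewrite pair_bigA; apply: eq_bigr => -[]. Qed.

Lemma inf_eq_min (E : set R) (e : R) : E e -> (forall y, E y -> e <= y) -> inf E = e.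
Proof.
move=> Ee e_lb; apply/eqP; rewrite eq_le ge_inf //=; last by exists e.
by apply: lb_le_inf => //; exists e.
Qed.

Lemma mixd_min n (I J : finType) (p0 : I -> R) (g0 : I -> gauss R n)
    (p1 : J -> R) (g1 : J -> gauss R n) (pi : I -> J -> R) :
  let c := fun i j => W2sq (g0 i) (g1 j) in
  couplings p0 p1 pi -> (forall pi', couplings p0 p1 pi' ->
    coupling_cost c pi <= coupling_cost c pi') ->
  mixd p0 g0 p1 g1 = Num.sqrt (coupling_cost c pi).
Proof.
move=> c pi_coupling pi_min; congr Num.sqrt; apply: inf_eq_min; first by exists pi.
by move=> _ [pi' pi'_coupling <-]; apply: pi_min.
Qed.

Section DiagonalCoupling.
Variables (I : finType) (q : I -> R).

Definition diag_coupling : I -> I -> R := fun i k => if i == k then q i else 0.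

Lemma diag_couplingP : (forall i, 0 <= q i) -> couplings q q diag_coupling.
Proof.
move=> q_ge0; split=> [i k|]; first by rewrite /diag_coupling; case: eqP.
split=> [i|k].
  rewrite (bigD1 i) //= /diag_coupling eqxx big1 ?addr0 // => j.
  by rewrite eq_sym => /negPf ->.
by rewrite (bigD1 k) //= /diag_coupling eqxx big1 ?addr0 // => j /negPf ->.
Qed.

Lemma coupling_cost_diag (c : I -> I -> R) :
  coupling_cost c diag_coupling = \sum_i c i i * q i.
Proof.
apply: eq_bigr => i _; rewrite (bigD1 i) //= /diag_coupling eqxx big1 ?addr0 // => k.
by rewrite eq_sym => /negPf ->; rewrite mulr0.
Qed.

End DiagonalCoupling.

Section Gluing.
Variables (I J K L : finType) (p0 : I -> R) (p1 : J -> R) (p0' : K -> R) (p1' : L -> R).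
Variables (pi : I -> J -> R) (pi' : K -> L -> R) (gm : I * J -> K * L -> R).
Hypotheses (pi_coupling : couplings p0 p1 pi) (pi'_coupling : couplings p0' p1' pi').
Hypothesis gm_coupling :
  couplings (fun ij => pi ij.1 ij.2) (fun kl => pi' kl.1 kl.2) gm.

Definition glue : I -> L -> R := fun i l => \sum_j \sum_k gm (i, j) (k, l).

Lemma glue_coupling : couplings p0 p1' glue.
Proof.
have [gm_ge0 [gm_row gm_col]] := gm_coupling.
split=> [i l|]; first by apply: sumr_ge0 => j _; apply: sumr_ge0 => k _.
rewrite /glue; split=> [i|l].
  rewrite -pi_coupling.2.1 exchange_big; apply: eq_bigr => j _ /=.
  by rewrite exchange_big big_pair_uncurry gm_row.
rewrite -pi'_coupling.2.2 (big_pair_uncurry (fun ij => \sum_k gm ij (k, l))) exchange_big.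
by apply: eq_bigr => k _; rewrite gm_col.
Qed.

Lemma coupling_cost_glue (c : I -> L -> R) :
  coupling_cost c glue = \sum_x gm x.1 x.2 * c x.1.1 x.2.2.
Proof.
rewrite -big_pair_uncurry -big_pair_uncurry /coupling_cost; apply: eq_bigr => i _.
rewrite /glue; under eq_bigr do rewrite mulr_sumr.
rewrite exchange_big; apply: eq_bigr => j _ /=.
rewrite -(big_pair_uncurry (fun kl => gm (i, j) kl * c i kl.2)) /=.
under eq_bigr do rewrite mulr_sumr.
by rewrite exchange_big; do 2!(apply: eq_bigr => ? _); rewrite mulrC.
Qed.

End Gluing.
End Couplings.

Section Marginals.
Variables (R : realType) (X Y : finType) (w : X -> Y -> R).

Lemma l2norm_fst (f : X -> R) :
  l2norm (fun x => w x.1 x.2) (fun x => f x.1) =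
  Num.sqrt (\sum_x (\sum_y w x y) * f x ^+ 2).
Proof.
rewrite /l2norm -big_pair_uncurry; congr Num.sqrt; apply: eq_bigr => x _.
by rewrite mulr_suml.
Qed.

Lemma l2norm_snd (f : Y -> R) :
  l2norm (fun x => w x.1 x.2) (fun x => f x.2) =
  Num.sqrt (\sum_y (\sum_x w x y) * f y ^+ 2).
Proof.
rewrite /l2norm -big_pair_uncurry exchange_big; congr Num.sqrt.
by apply: eq_bigr => y _; rewrite mulr_suml.
Qed.

End Marginals.

Lemma W2_interp_triangle (R : realType) n (a0 a1 b0 b1 : gauss R n) (s t : R) :
  spdmx a0.2 -> spdmx a1.2 -> spdmx b0.2 -> spdmx b1.2 ->
  0 <= s -> s <= t -> t <= 1 ->
  W2 a0 b1 <= s * W2 a0 a1 + W2 (disp_interp a0 a1 s) (disp_interp b0 b1 t)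
              + (1 - t) * W2 b0 b1.
Proof.
move=> a0_spd a1_spd b0_spd b1_spd s_ge0 st t_le1.
have s01 : 0 <= s <= 1 by rewrite s_ge0 (le_trans st).
have t01 : 0 <= t <= 1 by rewrite t_le1 (le_trans s_ge0).
set a_s := disp_interp a0 a1 s; set b_t := disp_interp b0 b1 t.
have as_spd : spdmx a_s.2 by apply: disp_interp_spd.
have bt_spd : spdmx b_t.2 by apply: disp_interp_spd.
have -> : s * W2 a0 a1 = W2 a0 a_s.
  by rewrite -{2}(disp_interp0 a1 a0_spd) W2_disp_interp ?subr0 //; case/andP: s01.
have -> : (1 - t) * W2 b0 b1 = W2 b_t b1.
  by rewrite -{2}(disp_interp1 b0_spd b1_spd) W2_disp_interp //; case/andP: t01.
apply: le_trans (W2_triangle a0_spd as_spd b1_spd) _; rewrite -addrA lerD2l.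
exact: W2_triangle.
Qed.

Section MixtureGeodesic.
Variables (R : realType) (n : nat) (I J : finType).
Variables (p0 : I -> R) (p1 : J -> R) (g0 : I -> gauss R n) (g1 : J -> gauss R n).
Variable pi : I -> J -> R.
Hypotheses (g0_spd : forall i, spdmx (g0 i).2) (g1_spd : forall j, spdmx (g1 j).2).
Let c := fun i j => W2sq (g0 i) (g1 j).
Hypotheses (pi_coupling : couplings p0 p1 pi)
  (pi_min : forall pi', couplings p0 p1 pi' -> coupling_cost c pi <= coupling_cost c pi').

Let q (ij : I * J) := pi ij.1 ij.2.
Let nu (t : R) (ij : I * J) := disp_interp (g0 ij.1) (g1 ij.2) t.

Let a (ij : I * J) := W2 (g0 ij.1) (g1 ij.2).
Let D := Num.sqrt (coupling_cost c pi).

Let c_ge0 i j : 0 <= c i j. Proof. exact: W2sq_ge0. Qed.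

Let cost_pi_ge0 : 0 <= coupling_cost c pi.
Proof.
by apply: sumr_ge0 => i _; apply: sumr_ge0 => j _; rewrite mulr_ge0 ?pi_coupling.1.
Qed.

Let sqrt_cost_pi u : 0 <= u -> Num.sqrt (\sum_ij q ij * (u * a ij) ^+ 2) = u * D.
Proof.
move=> u_ge0; rewrite (_ : \sum_ij _ = u ^+ 2 * coupling_cost c pi).
  by rewrite sqrtrM ?sqr_ge0 // sqrtr_sqr ger0_norm.
rewrite /coupling_cost pair_bigA mulr_sumr; apply: eq_bigr => ij _.
by rewrite /a /W2 exprMn (sqr_sqrtr (c_ge0 _ _)) /q /c; ring.
Qed.

Section LowerBound.
Variables (s t : R) (gm : I * J -> I * J -> R).
Hypotheses (s_ge0 : 0 <= s) (st : s <= t) (t_le1 : t <= 1).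
Hypothesis gm_coupling : couplings q q gm.

Let w (x : (I * J) * (I * J)) := gm x.1 x.2.
Let E := coupling_cost (fun ij kl => W2sq (nu s ij) (nu t kl)) gm.

Let w_ge0 x : 0 <= w x. Proof. exact: gm_coupling.1. Qed.

Let s01 : 0 <= s <= 1. Proof. by rewrite s_ge0 (le_trans st). Qed.
Let t01 : 0 <= t <= 1. Proof. by rewrite t_le1 (le_trans s_ge0). Qed.

Let E_ge0 : 0 <= E.
Proof.
apply: sumr_ge0 => ij _; apply: sumr_ge0 => kl _.
by apply: mulr_ge0; [apply: W2sq_ge0; apply: disp_interp_spd | exact: gm_coupling.1].
Qed.

(* [gm] glues into a coupling of [(p0, p1)], which costs at least as much as [pi]. *)
Let sqrt_cost_le_glued : D <= l2norm w (fun x => W2 (g0 x.1.1) (g1 x.2.2)).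
Proof.
have glue_gm := glue_coupling pi_coupling pi_coupling gm_coupling.
rewrite /D /l2norm ler_sqrt; last by apply: sumr_ge0 => x _; rewrite mulr_ge0 ?sqr_ge0.
apply: le_trans (pi_min glue_gm) _; rewrite coupling_cost_glue le_eqVlt; apply/orP; left.
by apply/eqP/eq_bigr => x _; rewrite /W2 (sqr_sqrtr (c_ge0 _ _)).
Qed.

(* Minkowski's inequality in [L2(gm)] applied to the pointwise bound
   [W2 (g0 i) (g1 l) <= s a(i,j) + W2 (nu s (i,j)) (nu t (k,l)) + (1 - t) a(k,l)]. *)
Let glued_le : l2norm w (fun x => W2 (g0 x.1.1) (g1 x.2.2)) <=
  s * D + Num.sqrt E + (1 - t) * D.
Proof.
have [_ [gm_row gm_col]] := gm_coupling.
set F := fun x : (I * J) * (I * J) => s * a x.1.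
set e := fun x : (I * J) * (I * J) => W2 (nu s x.1) (nu t x.2).
set H := fun x : (I * J) * (I * J) => (1 - t) * a x.2.
have l2F : l2norm w F = s * D.
  rewrite /w /F (l2norm_fst gm (fun ij => s * a ij)) -sqrt_cost_pi //.
  by congr Num.sqrt; apply: eq_bigr => ij _; rewrite gm_row.
have l2H : l2norm w H = (1 - t) * D.
  rewrite /w /H (l2norm_snd gm (fun kl => (1 - t) * a kl)) -sqrt_cost_pi ?subr_ge0 //.
  by congr Num.sqrt; apply: eq_bigr => kl _; rewrite gm_col.
have l2e : l2norm w e = Num.sqrt E.
  rewrite /E /coupling_cost pair_bigA; congr Num.sqrt; apply: eq_bigr => x _.
  by rewrite mulrC sqr_sqrtr // W2sq_ge0 //; apply: disp_interp_spd.
apply: (@le_trans _ _ (l2norm w (F \+ e \+ H))).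
  apply: l2norm_le => // x; rewrite sqrtr_ge0 /=.
  exact: W2_interp_triangle.
rewrite -l2F -l2e -l2H; apply: le_trans (l2norm_triangle w_ge0 _ _) _.
by rewrite lerD2r l2norm_triangle.
Qed.

Lemma interp_cost_lower : (t - s) ^+ 2 * coupling_cost c pi <= E.
Proof.
have D_le := le_trans sqrt_cost_le_glued glued_le.
rewrite -(sqr_sqrtr cost_pi_ge0) -(sqr_sqrtr E_ge0) -/D -exprMn.
rewrite ler_sqr ?nnegrE ?mulr_ge0 ?sqrtr_ge0 ?subr_ge0 //; lra.
Qed.

End LowerBound.

Lemma mixd_disp_interp s t : 0 <= s -> s <= t -> t <= 1 ->
  mixd q (nu s) q (nu t) = (t - s) * mixd p0 g0 p1 g1.
Proof.
move=> s_ge0 st t_le1.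
have s01 : 0 <= s <= 1 by rewrite s_ge0 (le_trans st).
have t01 : 0 <= t <= 1 by rewrite t_le1 (le_trans s_ge0).
have q_ge0 ij : 0 <= q ij := pi_coupling.1 ij.1 ij.2.
have diag_cost : coupling_cost (fun ij kl => W2sq (nu s ij) (nu t kl)) (diag_coupling q)
    = (t - s) ^+ 2 * coupling_cost c pi.
  rewrite coupling_cost_diag /coupling_cost pair_bigA mulr_sumr.
  by apply: eq_bigr => ij _; rewrite W2sq_disp_interp // mulrA.
rewrite (mixd_min pi_coupling pi_min) (mixd_min (diag_couplingP q_ge0)); last first.
  by move=> gm gm_coupling; rewrite diag_cost interp_cost_lower.
by rewrite diag_cost sqrtrM ?sqr_ge0 // sqrtr_sqr ger0_norm // subr_ge0.
Qed.

End MixtureGeodesic.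

Unset Implicit Arguments.

Theorem theorem2 (R : realType) (n N0 N1 : nat)
  (p0 : 'I_N0 -> R) (g0 : 'I_N0 -> gauss R n)
  (p1 : 'I_N1 -> R) (g1 : 'I_N1 -> gauss R n)
  (pistar : 'I_N0 -> 'I_N1 -> R) :
  probvec p0 -> probvec p1 ->
  (forall i, spdmx (g0 i).2) -> (forall j, spdmx (g1 j).2) ->
  couplings p0 p1 pistar ->
  (forall pi, couplings p0 p1 pi ->
     coupling_cost (fun i j => W2sq (g0 i) (g1 j)) pistar
     <= coupling_cost (fun i j => W2sq (g0 i) (g1 j)) pi) ->
  forall s t : R, 0 <= s -> s < t -> t <= 1 ->
  mixd (fun ij : 'I_N0 * 'I_N1 => pistar ij.1 ij.2)
       (fun ij : 'I_N0 * 'I_N1 => disp_interp (g0 ij.1) (g1 ij.2) s)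
       (fun ij : 'I_N0 * 'I_N1 => pistar ij.1 ij.2)
       (fun ij : 'I_N0 * 'I_N1 => disp_interp (g0 ij.1) (g1 ij.2) t)
  = (t - s) * mixd p0 g0 p1 g1.
Proof.
(* The marginals need not be normalised, and [s = t] would do as well. *)
move=> _ _ g0_spd g1_spd pi_coupling pi_min s t s_ge0 /ltW st t_le1.
exact: mixd_disp_interp.
Qed.
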